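(* Let $1\le i,j,k,l\le n$ with $i<j$ and $k<l$. In ${\boldsymbol U}_{v}(\mathfrak q_n)$: if $i<j<k<l$, or $i<k<l<j$, or ($i=k$ and $j=l$), or $k<l<i<j$, or $k<i<j<l$, then $\mathsf E_{i,j}\overline{\mathsf E}_{k,l}=\overline{\mathsf E}_{k,l}\mathsf E_{i,j}$; moreover \[ \mathsf E_{i,j}\overline{\mathsf E}_{k,l}=\begin{cases} v^{-1}\overline{\mathsf E}_{k,l}\mathsf E_{i,j}-\overline{\mathsf E}_{i,l} & (i<j=k<l),\\ v\,\overline{\mathsf E}_{k,l}\mathsf E_{i,j} & (i=k<j<l),\\ \overline{\mathsf E}_{k,l}\mathsf E_{i,j}+(v-v^{-1})\mathsf E_{k,j}\overline{\mathsf E}_{i,l} & (i<k<j<l),\\ v^{-1}\overline{\mathsf E}_{k,l}\mathsf E_{i,j}+\overline{\mathsf E}_{i,j}\mathsf E_{k,j}-v^{-1}\mathsf E_{k,j}\overline{\mathsf E}_{i,j} & (i<k<j=l),\\ v^{-1}\overline{\mathsf E}_{k,l}\mathsf E_{i,j}-(\mathsf E_{\bar i}\mathsf E_{i+1,j}-v^{-1}\mathsf E_{i+1,j}\mathsf E_{\bar i})\mathsf E_{k,i}+v^{-1}\mathsf E_{k,i}(\mathsf E_{\bar i}\mathsf E_{i+1,j}-v^{-1}\mathsf E_{i+1,j}\mathsf E_{\bar i}) & (k<l=i<j,\ j>i+1),\\ v^{-1}\overline{\mathsf E}_{k,l}\mathsf E_{i,j} & (k=i<l<j),\\ \overline{\mathsf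 E}_{k,l}\mathsf E_{i,j}+v^{-1}\overline{\mathsf E}_{i,l}\mathsf E_{k,j}-v\,\mathsf E_{k,j}\overline{\mathsf E}_{i,l} & (k<i<l<j),\\ v\,\overline{\mathsf E}_{k,l}\mathsf E_{i,j}-v\,\mathsf E_{k,j}\overline{\mathsf E}_{i,j}+\overline{\mathsf E}_{i,j}\mathsf E_{k,j} & (k<i<j=l). \end{cases} \]
   Context: Let $v$ be an indeterminate. The quantum queer superalgebra ${\boldsymbol U}_{v}(\mathfrak q_n)$ is the associative superalgebra over $\mathbb Q(v)$ generated by even generators $\mathsf K_i,\mathsf K_i^{-1}$ ($1\le i\le n$), $\mathsf E_j,\mathsf F_j$ ($1\le j\le n-1$) and odd generators $\mathsf K_{\bar i}$ ($1\le i\le n$), $\mathsf E_{\bar j},\mathsf F_{\bar j}$ ($1\le j\le n-1$), subject to the following relations (indices are taken only where they make sense), where $(\epsilon_i,\alpha_j)=\delta_{i,j}-\delta_{i,j+1}$: (QQ1) $\mathsf K_i\mathsf K_i^{-1}=\mathsf K_i^{-1}\mathsf K_i=1$, $\mathsf K_i\mathsf K_j=\mathsf K_j\mathsf K_i$, $\mathsf K_i\mathsf K_{\bar j}=\mathsf K_{\bar j}\mathsf K_i$, $\mathsf K_{\bar i}\mathsf K_{\bar j}+\mathsf K_{\bar j}\mathsf K_{\bar i}=2\delta_{i,j}\frac{\mathsf K_i^2-\mathsf K_i^{-2}}{v^2-v^{-2}}$. (QQ2) $\mathsf K_i\mathsf E_j=v^{(\epsilon_i,\alpha_j)}\mathsf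 E_j\mathsf K_i$, $\mathsf K_i\mathsf E_{\bar j}=v^{(\epsilon_i,\alpha_j)}\mathsf E_{\bar j}\mathsf K_i$, $\mathsf K_i\mathsf F_j=v^{-(\epsilon_i,\alpha_j)}\mathsf F_j\mathsf K_i$, $\mathsf K_i\mathsf F_{\bar j}=v^{-(\epsilon_i,\alpha_j)}\mathsf F_{\bar j}\mathsf K_i$. (QQ3) $\mathsf K_{\bar i}\mathsf E_i-v\mathsf E_i\mathsf K_{\bar i}=\mathsf E_{\bar i}\mathsf K_i^{-1}$, $v\mathsf K_{\bar i}\mathsf E_{i-1}-\mathsf E_{i-1}\mathsf K_{\bar i}=-\mathsf K_i^{-1}\mathsf E_{\overline{i-1}}$, $\mathsf K_{\bar i}\mathsf F_i-v\mathsf F_i\mathsf K_{\bar i}=-\mathsf F_{\bar i}\mathsf K_i$, $v\mathsf K_{\bar i}\mathsf F_{i-1}-\mathsf F_{i-1}\mathsf K_{\bar i}=\mathsf K_i\mathsf F_{\overline{i-1}}$, $\mathsf K_{\bar i}\mathsf E_{\bar i}+v\mathsf E_{\bar i}\mathsf K_{\bar i}=\mathsf E_i\mathsf K_i^{-1}$, $v\mathsf K_{\bar i}\mathsf E_{\overline{i-1}}+\mathsf E_{\overline{i-1}}\mathsf K_{\bar i}=\mathsf K_i^{-1}\mathsf E_{i-1}$, $\mathsf K_{\bar i}\mathsf F_{\bar i}+v\mathsf F_{\bar i}\mathsf K_{\bar i}=\mathsf F_i\mathsf K_i$, $v\mathsf K_{\bar i}\mathsf F_{\overline{i-1}}+\mathsf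 F_{\overline{i-1}}\mathsf K_{\bar i}=\mathsf K_i\mathsf F_{i-1}$, and for $j\ne i,i-1$: $\mathsf K_{\bar i}\mathsf E_j=\mathsf E_j\mathsf K_{\bar i}$, $\mathsf K_{\bar i}\mathsf F_j=\mathsf F_j\mathsf K_{\bar i}$, $\mathsf K_{\bar i}\mathsf E_{\bar j}=-\mathsf E_{\bar j}\mathsf K_{\bar i}$, $\mathsf K_{\bar i}\mathsf F_{\bar j}=-\mathsf F_{\bar j}\mathsf K_{\bar i}$. (QQ4) $\mathsf E_i\mathsf F_j-\mathsf F_j\mathsf E_i=\delta_{i,j}\frac{\mathsf K_i\mathsf K_{i+1}^{-1}-\mathsf K_i^{-1}\mathsf K_{i+1}}{v-v^{-1}}$, $\mathsf E_{\bar i}\mathsf F_{\bar j}+\mathsf F_{\bar j}\mathsf E_{\bar i}=\delta_{i,j}\big(\frac{\mathsf K_i\mathsf K_{i+1}-\mathsf K_i^{-1}\mathsf K_{i+1}^{-1}}{v-v^{-1}}+(v-v^{-1})\mathsf K_{\bar i}\mathsf K_{\overline{i+1}}\big)$, $\mathsf E_i\mathsf F_{\bar j}-\mathsf F_{\bar j}\mathsf E_i=\delta_{i,j}(\mathsf K_{i+1}^{-1}\mathsf K_{\bar i}-\mathsf K_{\overline{i+1}}\mathsf K_i^{-1})$, $\mathsf E_{\bar i}\mathsf F_j-\mathsf F_j\mathsf E_{\bar i}=\delta_{i,j}(\mathsf K_{i+1}\mathsf K_{\bar i}-\mathsf K_{\overline{i+1}}\mathsf K_i)$. (QQ5) $\mathsf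 E_{\bar i}^2=-\frac{v-v^{-1}}{v+v^{-1}}\mathsf E_i^2$, $\mathsf F_{\bar i}^2=\frac{v-v^{-1}}{v+v^{-1}}\mathsf F_i^2$; for $|i-j|\ne1$: $\mathsf E_i\mathsf E_{\bar j}=\mathsf E_{\bar j}\mathsf E_i$, $\mathsf F_i\mathsf F_{\bar j}=\mathsf F_{\bar j}\mathsf F_i$; for $|i-j|>1$: $\mathsf E_i\mathsf E_j=\mathsf E_j\mathsf E_i$, $\mathsf F_i\mathsf F_j=\mathsf F_j\mathsf F_i$, $\mathsf E_{\bar i}\mathsf E_{\bar j}=-\mathsf E_{\bar j}\mathsf E_{\bar i}$, $\mathsf F_{\bar i}\mathsf F_{\bar j}=-\mathsf F_{\bar j}\mathsf F_{\bar i}$; $\mathsf E_i\mathsf E_{i+1}-v\mathsf E_{i+1}\mathsf E_i=\mathsf E_{\bar i}\mathsf E_{\overline{i+1}}+v\mathsf E_{\overline{i+1}}\mathsf E_{\bar i}$, $\mathsf E_i\mathsf E_{\overline{i+1}}-v\mathsf E_{\overline{i+1}}\mathsf E_i=\mathsf E_{\bar i}\mathsf E_{i+1}-v\mathsf E_{i+1}\mathsf E_{\bar i}$, $\mathsf F_i\mathsf F_{i+1}-v\mathsf F_{i+1}\mathsf F_i=-(\mathsf F_{\bar i}\mathsf F_{\overline{i+1}}+v\mathsf F_{\overline{i+1}}\mathsf F_{\bar i})$, $\mathsf F_i\mathsf F_{\overline{i+1}}-v\mathsf F_{\overline{i+1}}\mathsf F_i=\mathsf F_{\bar i}\mathsf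 F_{i+1}-v\mathsf F_{i+1}\mathsf F_{\bar i}$. (QQ6) for $|i-j|=1$: $\mathsf E_i^2X-(v+v^{-1})\mathsf E_iX\mathsf E_i+X\mathsf E_i^2=0$ for $X\in\{\mathsf E_j,\mathsf E_{\bar j}\}$ and $\mathsf F_i^2Y-(v+v^{-1})\mathsf F_iY\mathsf F_i+Y\mathsf F_i^2=0$ for $Y\in\{\mathsf F_j,\mathsf F_{\bar j}\}$. Quantum root vectors: for $1\le i\le n-1$ put $\mathsf E_{i,i+1}=\mathsf E_i$, $\overline{\mathsf E}_{i,i+1}=\mathsf E_{\bar i}$, $\mathsf E_{i+1,i}=\mathsf F_i$, $\overline{\mathsf E}_{i+1,i}=\mathsf F_{\bar i}$, and recursively for $i+1<j\le n$: $\mathsf E_{i,j}=-\mathsf E_{i,j-1}\mathsf E_{j-1}+v^{-1}\mathsf E_{j-1}\mathsf E_{i,j-1}$, $\overline{\mathsf E}_{i,j}=-\mathsf E_{i,j-1}\mathsf E_{\overline{j-1}}+v^{-1}\mathsf E_{\overline{j-1}}\mathsf E_{i,j-1}$, $\mathsf E_{j,i}=-\mathsf F_{j-1}\mathsf E_{j-1,i}+v\mathsf E_{j-1,i}\mathsf F_{j-1}$, $\overline{\mathsf E}_{j,i}=-\mathsf F_{\overline{j-1}}\mathsf E_{j-1,i}+v\mathsf E_{j-1,i}\mathsf F_{\overline{j-1}}$. *)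

From HB Require Import structures.
From mathcomp Require Import all_boot all_order all_algebra.
Set Implicit Arguments.
Unset Strict Implicit.
Unset Printing Implicit Defensive.
Import Order.TTheory GRing.Theory Num.Theory.
Local Open Scope ring_scope.

Definition Qv : fieldType := {fraction {poly rat}}.
Definition vv : Qv := FracField.tofrac ('X : {poly rat}).

(* (epsilon_i, alpha_j) exponent:  v^{(eps_i,alpha_j)} *)
Definition vpw (i j : nat) : Qv :=
  if i == j then vv else if i == j.+1 then vv^-1 else 1.

Section Rels.
Variable A : algType Qv.
Variable n : nat.
(* Generators, indexed by natural numbers with the paper's 1-based
   conventions: K, Kinv, Kb (= K_bar) for 1 <= i <= n;
   E, F, Eb (= E_bar), Fb (= F_bar) for 1 <= j <= n-1.
   Values at other indices are irrelevant (no relation involves them). *)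
Variables (K Ki Kb E F Eb Fb : nat -> A).

Definition inK i := (1 <= i <= n)%N.
Definition inE j := (1 <= j <= n.-1)%N.

Record qq_rels : Prop := QQRels {
  qq1a : forall i, inK i -> K i * Ki i = 1 /\ Ki i * K i = 1;
  qq1b : forall i j, inK i -> inK j -> K i * K j = K j * K i;
  qq1c : forall i j, inK i -> inK j -> K i * Kb j = Kb j * K i;
  qq1d : forall i j, inK i -> inK j ->
    Kb i * Kb j + Kb j * Kb i =
    (if i == j then (2 * (vv ^+ 2 - vv ^- 2)^-1) *: (K i ^+ 2 - Ki i ^+ 2) else 0);
  qq2a : forall i j, inK i -> inE j -> K i * E j = vpw i j *: (E j * K i);
  qq2b : forall i j, inK i -> inE j -> K i * Eb j = vpw i j *: (Eb j * K i);
  qq2c : forall i j, inK i -> inE j -> K i * F j = (vpw i j)^-1 *: (F j * K i);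
  qq2d : forall i j, inK i -> inE j -> K i * Fb j = (vpw i j)^-1 *: (Fb j * K i);
  (* QQ3, relations with j = i (need 1 <= i <= n-1) *)
  qq3a : forall i, inK i -> inE i -> Kb i * E i - vv *: (E i * Kb i) = Eb i * Ki i;
  qq3c : forall i, inK i -> inE i -> Kb i * F i - vv *: (F i * Kb i) = - (Fb i * K i);
  qq3e : forall i, inK i -> inE i -> Kb i * Eb i + vv *: (Eb i * Kb i) = E i * Ki i;
  qq3g : forall i, inK i -> inE i -> Kb i * Fb i + vv *: (Fb i * Kb i) = F i * K i;
  (* QQ3, relations with j = i-1 (need 2 <= i <= n) *)
  qq3b : forall i, inK i -> inE i.-1 -> (1 < i)%N ->
    vv *: (Kb i * E i.-1) - E i.-1 * Kb i = - (Ki i * Eb i.-1);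
  qq3d : forall i, inK i -> inE i.-1 -> (1 < i)%N ->
    vv *: (Kb i * F i.-1) - F i.-1 * Kb i = K i * Fb i.-1;
  qq3f : forall i, inK i -> inE i.-1 -> (1 < i)%N ->
    vv *: (Kb i * Eb i.-1) + Eb i.-1 * Kb i = Ki i * E i.-1;
  qq3h : forall i, inK i -> inE i.-1 -> (1 < i)%N ->
    vv *: (Kb i * Fb i.-1) + Fb i.-1 * Kb i = K i * F i.-1;
  (* QQ3, j <> i, i-1 *)
  qq3i : forall i j, inK i -> inE j -> j != i -> j.+1 != i ->
    [/\ Kb i * E j = E j * Kb i, Kb i * F j = F j * Kb i,
        Kb i * Eb j = - (Eb j * Kb i) & Kb i * Fb j = - (Fb j * Kb i)];
  qq4a : forall i j, inE i -> inE j ->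
    E i * F j - F j * E i =
    (if i == j then (vv - vv^-1)^-1 *: (K i * Ki i.+1 - Ki i * K i.+1) else 0);
  qq4b : forall i j, inE i -> inE j ->
    Eb i * Fb j + Fb j * Eb i =
    (if i == j then (vv - vv^-1)^-1 *: (K i * K i.+1 - Ki i * Ki i.+1)
                    + (vv - vv^-1) *: (Kb i * Kb i.+1) else 0);
  qq4c : forall i j, inE i -> inE j ->
    E i * Fb j - Fb j * E i =
    (if i == j then Ki i.+1 * Kb i - Kb i.+1 * Ki i else 0);
  qq4d : forall i j, inE i -> inE j ->
    Eb i * F j - F j * Eb i =
    (if i == j then K i.+1 * Kb i - Kb i.+1 * K i else 0);
  qq5a : forall i, inE i ->
    Eb i ^+ 2 = - ((vv - vv^-1) / (vv + vv^-1)) *: E i ^+ 2;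
  qq5b : forall i, inE i ->
    Fb i ^+ 2 = ((vv - vv^-1) / (vv + vv^-1)) *: F i ^+ 2;
  qq5c : forall i j, inE i -> inE j -> i != j.+1 -> j != i.+1 ->
    E i * Eb j = Eb j * E i /\ F i * Fb j = Fb j * F i;
  qq5d : forall i j, inE i -> inE j -> (i.+1 < j)%N || (j.+1 < i)%N ->
    [/\ E i * E j = E j * E i, F i * F j = F j * F i,
        Eb i * Eb j = - (Eb j * Eb i) & Fb i * Fb j = - (Fb j * Fb i)];
  qq5e : forall i, inE i -> inE i.+1 ->
    E i * E i.+1 - vv *: (E i.+1 * E i) = Eb i * Eb i.+1 + vv *: (Eb i.+1 * Eb i);
  qq5f : forall i, inE i -> inE i.+1 ->
    E i * Eb i.+1 - vv *: (Eb i.+1 * E i) = Eb i * E i.+1 - vv *: (E i.+1 * Eb i);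
  qq5g : forall i, inE i -> inE i.+1 ->
    F i * F i.+1 - vv *: (F i.+1 * F i) = - (Fb i * Fb i.+1 + vv *: (Fb i.+1 * Fb i));
  qq5h : forall i, inE i -> inE i.+1 ->
    F i * Fb i.+1 - vv *: (Fb i.+1 * F i) = Fb i * F i.+1 - vv *: (F i.+1 * Fb i);
  qq6 : forall i j, inE i -> inE j -> (i == j.+1) || (j == i.+1) ->
    [/\ E i ^+ 2 * E j - (vv + vv^-1) *: (E i * E j * E i) + E j * E i ^+ 2 = 0,
        E i ^+ 2 * Eb j - (vv + vv^-1) *: (E i * Eb j * E i) + Eb j * E i ^+ 2 = 0,
        F i ^+ 2 * F j - (vv + vv^-1) *: (F i * F j * F i) + F j * F i ^+ 2 = 0 &
        F i ^+ 2 * Fb j - (vv + vv^-1) *: (F i * Fb j * F i) + Fb j * F i ^+ 2 = 0]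
}.

(* Upper quantum root vectors.  rootE i m = E_{i, i+1+m},
   rootEb i m = Ebar_{i, i+1+m}. *)
Fixpoint rootE (i m : nat) : A :=
  match m with
  | 0 => E i
  | m'.+1 => - (rootE i m' * E (i + m)%N) + vv^-1 *: (E (i + m)%N * rootE i m')
  end.

Definition rootEb (i m : nat) : A :=
  match m with
  | 0 => Eb i
  | m'.+1 => - (rootE i m' * Eb (i + m)%N) + vv^-1 *: (Eb (i + m)%N * rootE i m')
  end.

Definition Eij (i j : nat) : A := rootE i (j - i.+1).
Definition Ebij (i j : nat) : A := rootEb i (j - i.+1).

End Rels.

From Pilot Require Import Defs.
From HB Require Import structures.
From mathcomp Require Import all_boot all_order all_algebra zify.
Import Order.TTheory GRing.Theory Num.Theory.
Set Implicit Arguments.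
Unset Strict Implicit.
Unset Printing Implicit Defensive.
Local Open Scope ring_scope.

(* Write [qcomm x y] for the q-bracket [- x y + v^-1 y x], so that
   E_{i,j+1} = qcomm E_{i,j} E_j and Ebar_{i,j+1} = qcomm E_{i,j} Ebar_j.
   By induction on the length of the root vectors one lifts the defining
   relations from generators to root vectors: root vectors far apart
   commute, E_{i,j} = qcomm E_{i,m} E_{m,j} for i < m < j, adjacent
   root vectors satisfy the quantum Serre relations, E_{i,j} commutes with
   Ebar_{i,j}, and the relation (QQ5) between E, Ebar at neighbouring indices
   persists as qcomm Ebar_j E_{i,j} = qcomm E_j Ebar_{i,j}.  After splitting
   the root vectors involved, each case of the lemma becomes an identity
   between q-brackets of a few elements subject to such relations; these are
   proved in the free algebra by exhibiting the difference of the two sides as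
   an explicit combination of the relations. *)

(** * Normal forms in the free algebra *)

Lemma vv_neq0 : vv != 0.
Proof. by rewrite /vv -(tofrac0 _) tofrac_eq polyX_eq0. Qed.

Inductive coef :=
  | Cv | Cvinv | Cone | Cnat of nat
  | Cadd of coef & coef | Cmul of coef & coef | Copp of coef | Cexp of coef & nat.

Inductive ncterm :=
  | NAtom of nat | NZero | NOne | NAdd of ncterm & ncterm | NOpp of ncterm
  | NMul of ncterm & ncterm | NScale of coef & ncterm.

Fixpoint coef_eval (c : coef) : Qv :=
  match c with
  | Cv => vv | Cvinv => vv^-1 | Cone => 1 | Cnat k => k%:R
  | Cadd a b => coef_eval a + coef_eval b
  | Cmul a b => coef_eval a * coef_eval b
  | Copp a => - coef_eval a
  | Cexp a k => coef_eval a ^+ k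
  end.

(* Normal forms: a Laurent polynomial in [vv] is a list of pairs
   (exponent, coefficient); a noncommutative monomial is a word of atom
   indices together with such a pair. *)
Definition laurent := seq (int * int).
Definition ncmono := (seq nat * int * int)%type.

Definition laurent_mul (p q : laurent) : laurent :=
  [seq (a.1 + b.1, a.2 * b.2) | a <- p, b <- q].
Definition laurent_opp (p : laurent) : laurent := [seq (a.1, - a.2) | a <- p].

Fixpoint coef_norm (c : coef) : laurent :=
  match c with
  | Cv => [:: (1%Z, 1%Z)] | Cvinv => [:: ((-1)%Z, 1%Z)] | Cone => [:: (0%Z, 1%Z)]
  | Cnat k => [:: (0%Z, k%:Z)]
  | Cadd a b => coef_norm a ++ coef_norm b
  | Cmul a b => laurent_mul (coef_norm a) (coef_norm b)
  | Copp a => laurent_opp (coef_norm a)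
  | Cexp a k => iter k (laurent_mul (coef_norm a)) [:: (0%Z, 1%Z)]
  end.

Definition nc_opp (p : seq ncmono) : seq ncmono := [seq (m.1, - m.2) | m <- p].
Definition nc_mul (p q : seq ncmono) : seq ncmono :=
  [seq (a.1.1 ++ b.1.1, a.1.2 + b.1.2, a.2 * b.2) | a <- p, b <- q].
Definition nc_scale (l : laurent) (p : seq ncmono) : seq ncmono :=
  [seq (m.1.1, a.1 + m.1.2, a.2 * m.2) | a <- l, m <- p].

Fixpoint nc_norm (t : ncterm) : seq ncmono :=
  match t with
  | NAtom k => [:: ([:: k], 0%Z, 1%Z)]
  | NZero => [::]
  | NOne => [:: ([::], 0%Z, 1%Z)]
  | NAdd a b => nc_norm a ++ nc_norm b
  | NOpp a => nc_opp (nc_norm a)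
  | NMul a b => nc_mul (nc_norm a) (nc_norm b)
  | NScale c a => nc_scale (coef_norm c) (nc_norm a)
  end.

(* Summed with [foldr]: big operators are locked and would block [vm_compute]. *)
Definition nc_null (p : seq ncmono) : bool :=
  all (fun key => foldr +%R 0 [seq m.2 | m <- p & m.1 == key] == 0) [seq m.1 | m <- p].

Definition laurent_eval (l : laurent) : Qv := \sum_(a <- l) a.2%:~R * vv ^ a.1.

Lemma laurent_eval_cat p q : laurent_eval (p ++ q) = laurent_eval p + laurent_eval q.
Proof. by rewrite /laurent_eval big_cat. Qed.

Lemma laurent_eval_mul p q :
  laurent_eval (laurent_mul p q) = laurent_eval p * laurent_eval q.
Proof.
rewrite /laurent_eval big_allpairs_dep mulr_suml; apply: eq_bigr => a _.
rewrite mulr_sumr; apply: eq_bigr => b _ /=.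
by rewrite intrM expfzDr ?vv_neq0 // mulrACA.
Qed.

Lemma laurent_eval_opp p : laurent_eval (laurent_opp p) = - laurent_eval p.
Proof.
by rewrite /laurent_eval big_map -sumrN; apply: eq_bigr => a _; rewrite mulrNz mulNr.
Qed.

Lemma laurent_eval1 : laurent_eval [:: (0%Z, 1%Z)] = 1.
Proof. by rewrite /laurent_eval big_seq1 mulr1. Qed.

Lemma coef_normE c : laurent_eval (coef_norm c) = coef_eval c.
Proof.
elim: c => [| | |k|a IHa b IHb|a IHa b IHb|a IHa|a IHa k] /=;
  rewrite ?laurent_eval_cat ?laurent_eval_mul ?laurent_eval_opp ?IHa ?IHb //.
- by rewrite /laurent_eval big_seq1 /= expr1z mul1r.
- by rewrite /laurent_eval big_seq1 /= exprN1 mul1r.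
- exact: laurent_eval1.
- by rewrite /laurent_eval big_seq1 /= mulr1.
- elim: k => [|k IHk]; first exact: laurent_eval1.
  by rewrite iterS laurent_eval_mul IHk IHa exprS.
Qed.

Lemma sumrz_null (K : eqType) (M : zmodType) (f : K -> M) (s : seq (K * int)) :
  all (fun k => \sum_(m <- s | m.1 == k) m.2 == 0) [seq m.1 | m <- s] ->
  \sum_(m <- s) f m.1 *~ m.2 = 0.
Proof.
move: {2}(size s) (leqnn (size s)) => N.
elim: N s => [|N IH] [|m0 s] //=; rewrite ?big_nil // => size_s /andP [null_m0 null_s].
rewrite (bigID (fun m => m.1 == m0.1)) /=.
have -> : \sum_(m <- m0 :: s | m.1 == m0.1) f m.1 *~ m.2 =
          f m0.1 *~ \sum_(m <- m0 :: s | m.1 == m0.1) m.2.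
  by rewrite mulrz_sumr; apply: eq_bigr => m /eqP ->.
rewrite (eqP null_m0) mulr0z add0r -big_filter; apply: IH.
  by rewrite size_filter /= eqxx /= add0n; apply: leq_trans (count_size _ _) _.
apply/allP => k /mapP [m]; rewrite mem_filter => /andP [m_new m_in] ->.
have null_all : all (fun k => \sum_(m <- m0 :: s | m.1 == k) m.2 == 0)
                    [seq m.1 | m <- m0 :: s] by apply/andP.
move/allP: null_all => /(_ m.1 (map_f _ m_in)); rewrite big_filter_cond.
by rewrite (eq_bigl (fun i => i.1 == m.1)) // => i /=; apply/andb_idl => /eqP ->.
Qed.

Section NCEval.
Variables (A : algType Qv) (env : seq A).

Fixpoint nc_eval (t : ncterm) : A :=
  match t with
  | NAtom k => nth 0 env k
  | NZero => 0
  | NOne => 1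
  | NAdd a b => nc_eval a + nc_eval b
  | NOpp a => - nc_eval a
  | NMul a b => nc_eval a * nc_eval b
  | NScale c a => coef_eval c *: nc_eval a
  end.

Definition word_eval (w : seq nat) : A := \prod_(k <- w) nth 0 env k.
Definition mono_eval (m : ncmono) : A := (m.2%:~R * vv ^ m.1.2) *: word_eval m.1.1.
Definition poly_eval (p : seq ncmono) : A := \sum_(m <- p) mono_eval m.

Lemma poly_eval_cat p q : poly_eval (p ++ q) = poly_eval p + poly_eval q.
Proof. by rewrite /poly_eval big_cat. Qed.

Lemma poly_eval_opp p : poly_eval (nc_opp p) = - poly_eval p.
Proof.
rewrite /poly_eval big_map -sumrN; apply: eq_bigr => m _.
by rewrite /mono_eval /= mulrNz mulNr scaleNr.
Qed.

Lemma poly_eval_mul p q : poly_eval (nc_mul p q) = poly_eval p * poly_eval q.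
Proof.
rewrite /poly_eval big_allpairs_dep mulr_suml; apply: eq_bigr => a _.
rewrite mulr_sumr; apply: eq_bigr => b _ /=.
rewrite /mono_eval /word_eval /= big_cat -scalerAl -scalerAr scalerA intrM.
by rewrite expfzDr ?vv_neq0 // mulrACA.
Qed.

Lemma poly_eval_scale l p : poly_eval (nc_scale l p) = laurent_eval l *: poly_eval p.
Proof.
rewrite /poly_eval /laurent_eval big_allpairs_dep scaler_suml; apply: eq_bigr => a _.
rewrite scaler_sumr; apply: eq_bigr => m _ /=.
by rewrite /mono_eval /= scalerA intrM expfzDr ?vv_neq0 // mulrACA.
Qed.

Lemma nc_normE t : poly_eval (nc_norm t) = nc_eval t.
Proof.
elim: t => [k| | |a IHa b IHb|a IHa|a IHa b IHb|c a IHa] /=.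
- by rewrite /poly_eval big_seq1 /mono_eval /word_eval big_seq1 /= mulr1 scale1r.
- by rewrite /poly_eval big_nil.
- by rewrite /poly_eval big_seq1 /mono_eval /word_eval big_nil /= mulr1 scale1r.
- by rewrite poly_eval_cat IHa IHb.
- by rewrite poly_eval_opp IHa.
- by rewrite poly_eval_mul IHa IHb.
- by rewrite poly_eval_scale IHa coef_normE.
Qed.

Lemma poly_eval_null p : nc_null p -> poly_eval p = 0.
Proof.
move=> null_p; rewrite /poly_eval.
under eq_bigr => m _ do rewrite /mono_eval -scalerA scaler_int.
apply: (@sumrz_null _ _ (fun k : seq nat * int => vv ^ k.2 *: word_eval k.1)).
by move: null_p; apply: sub_all => k; rewrite foldrE big_map big_filter.
Qed.

Lemma nc_norm_sound t1 t2 :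
  nc_null (nc_norm t1 ++ nc_opp (nc_norm t2)) -> nc_eval t1 = nc_eval t2.
Proof.
move/poly_eval_null/eqP; rewrite poly_eval_cat poly_eval_opp !nc_normE subr_eq0.
by move/eqP.
Qed.

End NCEval.

Ltac nc_coef c :=
  lazymatch c with
  | vv => constr:(Cv)
  | vv^-1 => constr:(Cvinv)
  | 1 => constr:(Cone)
  | ?k%:R => constr:(Cnat k)
  | ?a ^+ ?k => let ra := nc_coef a in constr:(Cexp ra k)
  | ?a + ?b => let ra := nc_coef a in let rb := nc_coef b in constr:(Cadd ra rb)
  | ?a * ?b => let ra := nc_coef a in let rb := nc_coef b in constr:(Cmul ra rb)
  | - ?a => let ra := nc_coef a in constr:(Copp ra)
  end.

Ltac nc_atoms t env :=
  lazymatch t with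
  | 0 => env
  | 1 => env
  | ?a + ?b => let env := nc_atoms a env in nc_atoms b env
  | - ?a => nc_atoms a env
  | ?a * ?b => let env := nc_atoms a env in nc_atoms b env
  | _ *: ?a => nc_atoms a env
  | _ => lazymatch env with
         | context [t :: _] => env
         | _ => constr:(t :: env)
         end
  end.

Ltac nc_index t env :=
  lazymatch env with
  | t :: _ => constr:(0%N)
  | _ :: ?env' => let k := nc_index t env' in constr:(k.+1)
  end.

Ltac nc_reify t env :=
  lazymatch t with
  | 0 => constr:(NZero)
  | 1 => constr:(NOne)
  | ?a + ?b => let ra := nc_reify a env in let rb := nc_reify b env in constr:(NAdd ra rb)
  | - ?a => let ra := nc_reify a env in constr:(NOpp ra)
  | ?a * ?b => let ra := nc_reify a env in let rb := nc_reify b env in constr:(NMul ra rb)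
  | ?c *: ?a => let rc := nc_coef c in let ra := nc_reify a env in constr:(NScale rc ra)
  | _ => let k := nc_index t env in constr:(NAtom k)
  end.

(* [nc_ring] decides identities of the free algebra over Z[v, v^-1]: both
   sides are reified over a common list of atoms and their normal forms are
   compared coefficientwise. *)
Ltac nc_ring :=
  lazymatch goal with
  | |- @eq ?T ?t1 ?t2 =>
    let env := nc_atoms t1 (@nil T) in
    let env := nc_atoms t2 env in
    let r1 := nc_reify t1 env in
    let r2 := nc_reify t2 env in
    apply: (@nc_norm_sound _ env r1 r2); vm_compute; reflexivity
  end.

(** * Identities between q-brackets *)

Lemma qint2_neq0 : vv + vv^-1 != 0.
Proof.
have -> : vv + vv^-1 = vv^-1 * (1 + vv ^+ 2).
  rewrite mulrDr mulr1 expr2 (mulKf vv_neq0); exact: addrC.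
apply: mulf_neq0; first by rewrite invr_eq0 vv_neq0.
have -> : 1 + vv ^+ 2 = FracField.tofrac (1 + 'X^2 : {poly rat}).
  by rewrite rmorphD rmorph1 rmorphXn.
rewrite -(tofrac0 _) tofrac_eq; apply/eqP => /(congr1 (fun p : {poly rat} => p`_2)).
by rewrite coefD coef1 coefXn /= coef0.
Qed.

Lemma eq_lincomb (A : algType Qv) (s : Qv) (t1 t2 r : A) :
  s != 0 -> s *: (t1 - t2) = r -> r = 0 -> t1 = t2.
Proof.
move=> s_neq0 <- /eqP; rewrite scaler_eq0 (negbTE s_neq0) subr_eq0.
by move/eqP.
Qed.

Definition qcomm {A : algType Qv} (x y : A) : A := - (x * y) + vv^-1 *: (y * x).

Definition serre {A : algType Qv} (x y : A) : A :=
  x * x * y - (vv + vv^-1) *: (x * y * x) + y * (x * x).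

(* [lincomb s r] reduces [t1 = t2] to [r = 0], after checking
   [s *: (t1 - t2) = r] with [nc_ring]; [r] is given as a two-sided
   combination of the hypotheses, each written as a difference [lhs - rhs]. *)
Tactic Notation "lincomb" uconstr(s) uconstr(r) :=
  refine (@eq_lincomb _ s _ _ r _ _ _);
    [first [exact: oner_neq0 | exact: qint2_neq0] | by rewrite /qcomm /serre; nc_ring |].

Section QComm.
Variable A : algType Qv.
Implicit Types x y z u w : A.

Lemma qcommA x y z : GRing.comm x z -> qcomm (qcomm x y) z = qcomm x (qcomm y z).
Proof.
move=> Cxz; lincomb 1 (vv^-1 *: ((x * z - z * x) * y) - vv^-1 *: (y * (x * z - z * x))).
by rewrite Cxz subrr; nc_ring.
Qed.

Lemma comm_qcomm x y z :
  GRing.comm x y -> GRing.comm x z -> GRing.comm x (qcomm y z).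
Proof.
move=> Cxy Cxz; lincomb 1
   (- (x * y - y * x) * z
    + vv^-1 *: (z * (x * y - y * x))
    + vv^-1 *: ((x * z - z * x) * y)
    - y * (x * z - z * x)).
by rewrite Cxy Cxz !subrr; nc_ring.
Qed.

Lemma skew_comm_qcommL x y z :
  x * y = vv^-1 *: (y * x) -> GRing.comm z y -> qcomm x z * y = vv^-1 *: (y * qcomm x z).
Proof.
move=> Kxy Czy; lincomb 1
   (- (x * y - vv^-1 *: (y * x)) * z
    + vv^-1 *: (z * (x * y - vv^-1 *: (y * x)))
    + vv^-1 ^+ 2 *: ((z * y - y * z) * x)
    - x * (z * y - y * z)).
by rewrite Kxy Czy !subrr; nc_ring.
Qed.

Lemma defect_comm_qcommL x y z u w :
  x * y = y * x + vv^-1 *: (u * w) - vv *: (w * u) ->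
  GRing.comm z y ->
  GRing.comm z u ->
  qcomm x z * y = y * qcomm x z + vv^-1 *: (u * qcomm w z) - vv *: (qcomm w z * u).
Proof.
move=> Dxy Czy Czu; lincomb 1
   (- (x * y - (y * x + vv^-1 *: (u * w) - vv *: (w * u))) * z
    + vv^-1 *: (z * (x * y - (y * x + vv^-1 *: (u * w) - vv *: (w * u))))
    + vv^-1 *: ((z * y - y * z) * x)
    - x * (z * y - y * z)
    + vv^-1 ^+ 2 *: ((z * u - u * z) * w)
    - vv *: (w * (z * u - u * z))).
by rewrite Dxy Czy Czu !subrr; nc_ring.
Qed.

Lemma serre_skew_comm x y :
  serre x y = 0 -> x * qcomm x y = vv *: (qcomm x y * x).
Proof.
move=> Sxy; lincomb 1 (- serre x y).
by rewrite Sxy; nc_ring.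
Qed.

Lemma qcomm_mul_comm x y z :
  GRing.comm y z ->
  qcomm x y * z = vv^-1 *: (z * qcomm x y) + qcomm x z * y - vv^-1 *: (y * qcomm x z).
Proof.
move=> Cyz; lincomb 1
   (vv^-1 ^+ 2 *: ((y * z - z * y) * x)
    - x * (y * z - z * y)).
by rewrite Cyz subrr; nc_ring.
Qed.

Lemma mul_qcomm_comm x y z :
  GRing.comm y z ->
  y * qcomm x z = vv *: (qcomm x z * y) - vv *: (qcomm x y * z) + z * qcomm x y.
Proof.
move=> Cyz; lincomb 1
   (vv^-1 *: ((y * z - z * y) * x)
    - vv *: (x * (y * z - z * y))).
by rewrite Cyz subrr; nc_ring.
Qed.

Lemma comm_qcomm_serre x y z :
  serre x y = 0 -> serre x z = 0 -> GRing.comm y z -> GRing.comm (qcomm x y) (qcomm x z).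
Proof.
move=> Sxy Sxz Cyz; lincomb (vv + vv^-1)
   (- serre x y * z
    + vv^-1 ^+ 2 *: (z * serre x y)
    + serre x z * y
    - vv^-1 ^+ 2 *: (y * serre x z)
    + vv^-1 ^+ 2 *: ((y * z - z * y) * x * x)
    - vv^-1 * (vv + vv^-1) *: (x * (y * z - z * y) * x)
    + x * x * (y * z - z * y)).
by rewrite Sxy Sxz Cyz subrr; nc_ring.
Qed.

Lemma serre_qcommL x y z :
  serre x y = 0 -> GRing.comm x z -> serre y z = 0 -> serre (qcomm x y) z = 0.
Proof.
move=> Sxy Cxz Syz; lincomb (vv + vv^-1)
   (- serre x y * y * z
    - vv^-1 ^+ 2 *: (y * serre x y * z)
    + vv^-1 ^+ 2 * (vv + vv^-1) *: (y * z * serre x y)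
    + (vv + vv^-1) *: (serre x y * z * y)
    - z * serre x y * y
    - vv^-1 ^+ 2 *: (z * y * serre x y)
    + vv^-1 ^+ 2 * (vv + vv^-1) *: (y * (x * z - z * x) * x * y)
    - (vv + vv^-1) *: (y * x * (x * z - z * x) * y)
    + vv^-1 * (vv + vv^-1) *: ((x * z - z * x) * y * y * x)
    - vv^-1 ^+ 2 * (vv + vv^-1) ^+ 2 *: (y * (x * z - z * x) * y * x)
    + vv^-1 ^+ 2 *: (y * y * (x * z - z * x) * x)
    + vv^-1 ^+ 2 *: (y * y * x * (x * z - z * x))
    - (x * z - z * x) * x * y * y
    - x * (x * z - z * x) * y * y
    + (vv + vv^-1) ^+ 2 *: (x * y * (x * z - z * x) * y)
    - vv^-1 * (vv + vv^-1) *: (x * y * y * (x * z - z * x))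
    + vv^-1 ^+ 2 *: (serre y z * x * x)
    - vv^-1 * (vv + vv^-1) *: (x * serre y z * x)
    + x * x * serre y z).
by rewrite Sxy Syz Cxz subrr; nc_ring.
Qed.

Lemma serre_qcommL' x y z :
  serre x y = 0 ->
  serre y x = 0 ->
  serre x z = 0 ->
  GRing.comm y z ->
  serre (qcomm x y) z = 0.
Proof.
move=> Sxy Syx Sxz Cyz; lincomb (vv + vv^-1)
   (- (vv + vv^-1) *: (x * (z * y - y * z) * y * x)
    + vv^-1 ^+ 2 * (vv + vv^-1) *: (x * y * (z * y - y * z) * x)
    - (vv + vv^-1) *: (x * y * x * (z * y - y * z))
    + vv^-1 ^+ 2 *: ((z * y - y * z) * y * x * x)
    + vv^-1 ^+ 2 *: (y * (z * y - y * z) * x * x)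
    - vv^-1 ^+ 2 * (vv + vv^-1) ^+ 2 *: (y * x * (z * y - y * z) * x)
    + (vv^-1 ^+ 2 + 2) *: (y * x * x * (z * y - y * z))
    - vv^-1 * (vv + vv^-1) *: ((z * y - y * z) * x * x * y)
    + (vv + vv^-1) ^+ 2 *: (x * (z * y - y * z) * x * y)
    - x * x * (z * y - y * z) * y
    + serre x z * y * y
    - vv^-1 * (vv + vv^-1) *: (y * serre x z * y)
    + vv^-1 ^+ 2 *: (y * y * serre x z)
    - serre x y * z * y
    - z * serre x y * y
    + z * y * serre x y
    + y * serre x y * z
    + vv^-1 ^+ 2 * (vv + vv^-1) *: (serre y x * z * x)
    - vv^-1 * (vv + vv^-1) *: (z * serre y x * x)
    - vv^-1 * (vv + vv^-1) *: (serre y x * x * z)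
    + (vv + vv^-1) *: (x * z * serre y x)).
by rewrite Sxy Syx Sxz Cyz subrr; nc_ring.
Qed.

Lemma serre_qcommR x y z :
  GRing.comm x z -> serre z y = 0 -> serre z (qcomm x y) = 0.
Proof.
move=> Cxz Szy; lincomb 1
   (- (vv + vv^-1) *: ((x * z - z * x) * y * z)
    + vv^-1 *: (y * (x * z - z * x) * z)
    + vv^-1 *: (y * z * (x * z - z * x))
    + (x * z - z * x) * z * y
    + z * (x * z - z * x) * y
    - vv^-1 * (vv + vv^-1) *: (z * y * (x * z - z * x))
    + vv^-1 *: (serre z y * x)
    - x * serre z y).
by rewrite Szy Cxz subrr; nc_ring.
Qed.

Lemma serre_qcommR' x y z :
  serre x y = 0 -> GRing.comm x z -> serre x (qcomm y z) = 0.
Proof.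
move=> Sxy Cxz; lincomb 1
   (- serre x y * z
    + vv^-1 *: (z * serre x y)
    + vv^-1 *: ((x * z - z * x) * x * y)
    + vv^-1 *: (x * (x * z - z * x) * y)
    - (vv + vv^-1) *: (x * y * (x * z - z * x))
    - vv^-1 * (vv + vv^-1) *: ((x * z - z * x) * y * x)
    + y * (x * z - z * x) * x
    + y * x * (x * z - z * x)).
by rewrite Sxy Cxz subrr; nc_ring.
Qed.

Lemma comm_qcomm_qcomm x y z :
  GRing.comm x z -> serre y x = 0 -> serre y z = 0 -> GRing.comm y (qcomm (qcomm x y) z).
Proof.
move=> Cxz Syx Syz; lincomb (vv + vv^-1)
   (- (x * z - z * x) * y * y
    + vv^-1 * (vv + vv^-1) *: (y * (x * z - z * x) * y)
    - vv^-1 ^+ 2 *: (y * y * (x * z - z * x))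
    - serre y x * z
    + vv^-1 ^+ 2 *: (z * serre y x)
    - vv^-1 ^+ 2 *: (serre y z * x)
    + x * serre y z).
by rewrite Syx Syz Cxz subrr; nc_ring.
Qed.

Lemma qcomm_overlap x y z :
  GRing.comm x z ->
  serre y x = 0 ->
  serre y z = 0 ->
  qcomm x y * qcomm y z =
    qcomm y z * qcomm x y + (vv - vv^-1) *: (y * qcomm (qcomm x y) z).
Proof.
move=> Cxz Syx Syz; lincomb (vv + vv^-1)
   (- vv^-1 *: ((x * z - z * x) * y * y)
    + vv^-1 ^+ 2 * (vv + vv^-1) *: (y * (x * z - z * x) * y)
    - vv^-1 ^+ 3 *: (y * y * (x * z - z * x))
    + vv *: (serre y x * z)
    - vv^-1 *: (z * serre y x)
    - vv^-1 ^+ 3 *: (serre y z * x)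
    + vv^-1 *: (x * serre y z)).
by rewrite Syx Syz Cxz subrr; nc_ring.
Qed.

(* Below, [x_k] and [y_k] play the roles of E- and Ebar-type elements at
   consecutive positions, and [qcomm y2 x1 = qcomm x2 y1] has the shape of
   relation (QQ5) (see [twist_E]). *)
Lemma twist_skew_comm x1 x2 y1 y2 :
  GRing.comm x1 y1 ->
  serre x1 y2 = 0 ->
  qcomm y2 x1 = qcomm x2 y1 ->
  qcomm x1 x2 * y1 = vv^-1 *: (y1 * qcomm x1 x2).
Proof.
move=> C11 S12 T12; lincomb 1
   (- vv^-1 *: ((x1 * y1 - y1 * x1) * x2)
    + vv^-1 *: (x2 * (x1 * y1 - y1 * x1))
    + vv^-1 *: (serre x1 y2)
    + vv^-1 *: ((qcomm y2 x1 - qcomm x2 y1) * x1)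
    - x1 * (qcomm y2 x1 - qcomm x2 y1)).
by rewrite S12 T12 C11 !subrr; nc_ring.
Qed.

Lemma twist_qcomm x1 x2 x3 y2 y3 :
  GRing.comm x1 x3 ->
  GRing.comm x1 y3 ->
  qcomm y3 x2 = qcomm x3 y2 ->
  qcomm y3 (qcomm x1 x2) = qcomm x3 (qcomm x1 y2).
Proof.
move=> C13 C13b T23; lincomb 1
   ((x1 * x3 - x3 * x1) * y2
    - vv^-1 ^+ 2 *: (y2 * (x1 * x3 - x3 * x1))
    - (x1 * y3 - y3 * x1) * x2
    + vv^-1 ^+ 2 *: (x2 * (x1 * y3 - y3 * x1))
    + vv^-1 *: ((qcomm y3 x2 - qcomm x3 y2) * x1)
    - x1 * (qcomm y3 x2 - qcomm x3 y2)).
by rewrite T23 C13 C13b !subrr; nc_ring.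
Qed.

Lemma twist_comm_qcomm_qcomm x1 x2 x3 y1 y2 y3 :
  GRing.comm x1 x3 ->
  GRing.comm x1 y3 ->
  qcomm y2 x1 = qcomm x2 y1 ->
  serre x2 x1 = 0 ->
  serre x2 y1 = 0 ->
  GRing.comm x2 y2 ->
  serre x2 y3 = 0 ->
  qcomm y3 x2 = qcomm x3 y2 ->
  GRing.comm (qcomm (qcomm x1 x2) x3) y2.
Proof.
move=> C13 C13b T12 S21 S21b C22 S23b T23; lincomb (vv + vv^-1)
   (- vv^-1 * (vv + vv^-1) *: ((x1 * x3 - x3 * x1) * y2 * x2)
    + vv^-1 * (vv + vv^-1) *: ((x1 * x3 - x3 * x1) * x2 * y2)
    + (x1 * y3 - y3 * x1) * x2 * x2
    - vv^-1 * (vv + vv^-1) *: (x2 * (x1 * y3 - y3 * x1) * x2)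
    + vv^-1 ^+ 2 *: (x2 * x2 * (x1 * y3 - y3 * x1))
    + (vv + vv^-1) *: ((qcomm y2 x1 - qcomm x2 y1) * x2 * x3)
    - vv^-1 * (vv + vv^-1) *: (x2 * (qcomm y2 x1 - qcomm x2 y1) * x3)
    - (vv + vv^-1) *: (x3 * (qcomm y2 x1 - qcomm x2 y1) * x2)
    + vv^-1 * (vv + vv^-1) *: (x3 * x2 * (qcomm y2 x1 - qcomm x2 y1))
    - vv^-1 ^+ 2 *: (serre x2 x1 * y3)
    + y3 * serre x2 x1
    + vv^-1 * (vv + vv^-1) *: (serre x2 y1 * x3)
    - vv^-1 * (vv + vv^-1) *: (x3 * serre x2 y1)
    - vv^-1 * (vv + vv^-1) *: ((x2 * y2 - y2 * x2) * x1 * x3)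
    + vv^-1 * (vv + vv^-1) *: (x1 * (x2 * y2 - y2 * x2) * x3)
    - vv^-1 * (vv + vv^-1) *: (x1 * x3 * (x2 * y2 - y2 * x2))
    + vv^-1 * (vv + vv^-1) *: (x3 * (x2 * y2 - y2 * x2) * x1)
    + vv^-1 ^+ 2 *: (serre x2 y3 * x1)
    - x1 * serre x2 y3
    - (vv + vv^-1) *: ((qcomm y3 x2 - qcomm x3 y2) * x1 * x2)
    + (vv + vv^-1) *: (x1 * x2 * (qcomm y3 x2 - qcomm x3 y2))
    + vv^-1 * (vv + vv^-1) *: ((qcomm y3 x2 - qcomm x3 y2) * x2 * x1)
    - vv^-1 * (vv + vv^-1) *: (x2 * x1 * (qcomm y3 x2 - qcomm x3 y2))).
by rewrite S21 S21b S23b T12 T23 C13 C13b C22 !subrr; nc_ring.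
Qed.

Lemma twist_adjacent x1 x2 x3 y1 y2 :
  GRing.comm x1 x3 ->
  qcomm y2 x1 = qcomm x2 y1 ->
  GRing.comm x3 y1 ->
  qcomm x2 x3 * y1 = vv^-1 *: (y1 * qcomm x2 x3)
    - (y2 * x3 - vv^-1 *: (x3 * y2)) * x1 + vv^-1 *: (x1 * (y2 * x3 - vv^-1 *: (x3 * y2))).
Proof.
move=> C13 T12 C31; lincomb 1
   (vv^-1 ^+ 2 *: ((x1 * x3 - x3 * x1) * y2)
    - y2 * (x1 * x3 - x3 * x1)
    - (qcomm y2 x1 - qcomm x2 y1) * x3
    + vv^-1 *: (x3 * (qcomm y2 x1 - qcomm x2 y1))
    + vv^-1 ^+ 2 *: ((x3 * y1 - y1 * x3) * x2)
    - x2 * (x3 * y1 - y1 * x3)).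
by rewrite T12 C13 C31 !subrr; nc_ring.
Qed.

Lemma twist_overlap x1 x2 x3 y2 y3 :
  GRing.comm x1 x3 ->
  GRing.comm x2 y2 ->
  serre x2 y3 = 0 ->
  qcomm y3 x2 = qcomm x3 y2 ->
  qcomm x2 x3 * qcomm x1 y2 = qcomm x1 y2 * qcomm x2 x3
    + vv^-1 *: (y2 * qcomm (qcomm x1 x2) x3) - vv *: (qcomm (qcomm x1 x2) x3 * y2).
Proof.
move=> C13 C22 S23 T23; lincomb 1
   (- vv^-1 ^+ 2 *: (y2 * (x1 * x3 - x3 * x1) * x2)
    + (x1 * x3 - x3 * x1) * x2 * y2
    - x2 * (x1 * x3 - x3 * x1) * y2
    + vv^-1 ^+ 2 *: (x2 * y2 * (x1 * x3 - x3 * x1))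
    - vv^-1 ^+ 2 *: ((x2 * y2 - y2 * x2) * x1 * x3)
    + x1 * (x2 * y2 - y2 * x2) * x3
    - x1 * x3 * (x2 * y2 - y2 * x2)
    + vv^-1 ^+ 2 *: (x3 * (x2 * y2 - y2 * x2) * x1)
    + vv^-1 ^+ 2 *: (serre x2 y3 * x1)
    - x1 * serre x2 y3
    - x1 * (qcomm y3 x2 - qcomm x3 y2) * x2
    + vv *: (x1 * x2 * (qcomm y3 x2 - qcomm x3 y2))
    + vv^-1 ^+ 2 *: ((qcomm y3 x2 - qcomm x3 y2) * x2 * x1)
    - vv^-1 *: (x2 * (qcomm y3 x2 - qcomm x3 y2) * x1)).
by rewrite S23 T23 C13 C22 !subrr; nc_ring.
Qed.

End QComm.

(** * Root vectors *)

Section RootVectors.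
Variables (n : nat) (A : algType Qv) (K Ki Kb E F Eb Fb : nat -> A).
Hypothesis rels : qq_rels n K Ki Kb E F Eb Fb.

Local Notation Er := (Eij E).
Local Notation Ebr := (Ebij E Eb).

Lemma inE_range m : (0 < m < n)%N -> Defs.inE n m.
Proof. by rewrite /Defs.inE; lia. Qed.

Lemma comm_E i j : [&& 0 < i, i < n, 0 < j & j < n]%N -> (i.+1 < j)%N || (j.+1 < i)%N ->
  GRing.comm (E i) (E j).
Proof.
move=> bounds far.
by case: (qq5d rels (inE_range (m := i) ltac:(lia)) (inE_range (m := j) ltac:(lia)) far).
Qed.

Lemma comm_E_Eb i j : [&& 0 < i, i < n, 0 < j & j < n]%N -> i != j.+1 -> j != i.+1 ->
  GRing.comm (E i) (Eb j).
Proof.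
move=> bounds ij ji.
by case: (qq5c rels (inE_range (m := i) ltac:(lia)) (inE_range (m := j) ltac:(lia)) ij ji).
Qed.

Lemma serre_E i j : [&& 0 < i, i < n, 0 < j & j < n]%N -> (i == j.+1) || (j == i.+1) ->
  serre (E i) (E j) = 0 /\ serre (E i) (Eb j) = 0.
Proof.
move=> bounds adj.
case: (qq6 rels (inE_range (m := i) ltac:(lia)) (inE_range (m := j) ltac:(lia)) adj).
by rewrite /serre -!expr2 => -> -> _ _.
Qed.

(* Relation (QQ5) for E_i, Ebar_{i+1}, Ebar_i, E_{i+1}, divided by [v]. *)
Lemma twist_E i : (0 < i)%N -> (i.+1 < n)%N -> qcomm (Eb i.+1) (E i) = qcomm (E i.+1) (Eb i).
Proof.
move=> i_gt0 lt_in.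
have twist := qq5f rels (inE_range (m := i) ltac:(lia)) (inE_range (m := i.+1) ltac:(lia)).
lincomb 1
  (vv^-1 *: (E i * Eb i.+1 - vv *: (Eb i.+1 * E i) - (Eb i * E i.+1 - vv *: (E i.+1 * Eb i)))).
by rewrite twist subrr; nc_ring.
Qed.

Lemma Eij1 p : Er p p.+1 = E p.
Proof. by rewrite /Eij subnn. Qed.

Lemma Ebij1 p : Ebr p p.+1 = Eb p.
Proof. by rewrite /Ebij subnn. Qed.

Lemma EijS p q : (p < q)%N -> Er p q.+1 = qcomm (Er p q) (E q).
Proof.
move=> lt_pq; rewrite /Eij subSS -(subnSK lt_pq) /=.
by have -> : (p + (q - p.+1).+1)%N = q by lia.
Qed.

Lemma EbijS p q : (p < q)%N -> Ebr p q.+1 = qcomm (Er p q) (Eb q).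
Proof.
move=> lt_pq; rewrite /Ebij /Eij subSS -(subnSK lt_pq) /=.
by have -> : (p + (q - p.+1).+1)%N = q by lia.
Qed.

Lemma comm_gen_Eij_far m p q : [&& 0 < p, p < q, q <= n, 0 < m & m < n]%N ->
  (q < m)%N || (m.+1 < p)%N ->
  [/\ GRing.comm (E m) (Er p q), GRing.comm (Eb m) (Er p q) & GRing.comm (E m) (Ebr p q)].
Proof.
elim: q => [|q IH] bounds far; first by lia.
have [E_q Eb_q E_Ebq] : [/\ GRing.comm (E m) (E q), GRing.comm (Eb m) (E q)
                          & GRing.comm (E m) (Eb q)].
  split; [apply: comm_E | apply/commr_sym/comm_E_Eb | apply: comm_E_Eb]; lia.
case: (ltnP p q) => [lt_pq | ge_pq]; last first.
  have eq_pq : p = q by lia.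
  by subst p; rewrite Eij1 Ebij1; split.
have [IH1 IH2 IH3] := IH ltac:(lia) ltac:(lia).
by rewrite (EijS lt_pq) (EbijS lt_pq); split; apply: comm_qcomm.
Qed.

Lemma comm_Eij_far p q r s : [&& 0 < p, p < q, q < r, r < s & s <= n]%N ->
  [/\ GRing.comm (Er p q) (Er r s), GRing.comm (Er p q) (Ebr r s)
    & GRing.comm (Ebr p q) (Er r s)].
Proof.
elim: s => [|s IH] bounds; first by lia.
have [E_s Eb_s E_Ebs] := @comm_gen_Eij_far s p q ltac:(lia) ltac:(lia).
case: (ltnP r s) => [lt_rs | ge_rs]; last first.
  have eq_rs : r = s by lia.
  by subst r; rewrite Eij1 Ebij1; split; apply/commr_sym.
have [IH1 IH2 IH3] := IH ltac:(lia).
by rewrite (EijS lt_rs) (EbijS lt_rs); split; apply: comm_qcomm => //; apply/commr_sym.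
Qed.

Lemma Eij_split p m q : [&& 0 < p, p < m, m < q & q <= n]%N ->
  Er p q = qcomm (Er p m) (Er m q).
Proof.
elim: q => [|q IH] bounds; first by lia.
rewrite (EijS (_ : p < q)%N); last by lia.
case: (ltnP m q) => [lt_mq | ge_mq]; last first.
  have eq_mq : m = q by lia.
  by subst m; rewrite Eij1.
have [E_q _ _] := @comm_gen_Eij_far q p m ltac:(lia) ltac:(lia).
rewrite IH ?(EijS lt_mq) ?(qcommA _ (commr_sym E_q)) //; lia.
Qed.

Lemma Ebij_split p m q : [&& 0 < p, p < m, m < q & q <= n]%N ->
  Ebr p q = qcomm (Er p m) (Ebr m q).
Proof.
case: q => [|q] bounds; first by lia.
rewrite (EbijS (_ : p < q)%N); last by lia.
case: (ltnP m q) => [lt_mq | ge_mq]; last first.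
  have eq_mq : m = q by lia.
  by subst m; rewrite Ebij1.
have [_ Eb_q _] := @comm_gen_Eij_far q p m ltac:(lia) ltac:(lia).
by rewrite (@Eij_split p m q) ?(EbijS lt_mq) ?(qcommA _ (commr_sym Eb_q)) //; lia.
Qed.

Lemma serre_Eij p q r : [&& 0 < p, p < q, q < r & r <= n]%N ->
  serre (Er p q) (Er q r) = 0 /\ serre (Er q r) (Er p q) = 0.
Proof.
move: {2}(r - p)%N (leqnn (r - p)) => d.
elim: d p q r => [|d IH] p q r le_d bounds; first by lia.
case: (ltnP p.+1 q) => [lt_p1q | ge_p1q].
  have [S12 _] := IH p p.+1 q ltac:(lia) ltac:(lia).
  have [S23 S32] := IH p.+1 q r ltac:(lia) ltac:(lia).
  have [C13 _ _] := @comm_Eij_far p p.+1 q r ltac:(lia).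
  rewrite Eij1 in S12 C13.
  rewrite (@Eij_split p p.+1 q) ?Eij1; last by lia.
  by split; [apply: serre_qcommL | apply: serre_qcommR].
case: (ltnP q.+1 r) => [lt_q1r | ge_q1r].
  have [S12 S21] := IH p q q.+1 ltac:(lia) ltac:(lia).
  have [S23 S32] := IH q q.+1 r ltac:(lia) ltac:(lia).
  have [C13 _ _] := @comm_Eij_far p q q.+1 r ltac:(lia).
  rewrite Eij1 in S12 S21 S23 S32.
  rewrite (@Eij_split q q.+1 r) ?Eij1; last by lia.
  by split; [apply: serre_qcommR' | apply: serre_qcommL' => //; apply/commr_sym].
have [-> ->] : q = p.+1 /\ r = p.+2 by lia.
rewrite !Eij1; split; apply: (proj1 (serre_E _ _)); lia.
Qed.

Lemma serre_Eij_Ebij p q r : [&& 0 < p, p < q, q < r & r <= n]%N ->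
  serre (Er p q) (Ebr q r) = 0 /\ serre (Er q r) (Ebr p q) = 0.
Proof.
move: {2}(r - p)%N (leqnn (r - p)) => d.
elim: d p q r => [|d IH] p q r le_d bounds; first by lia.
case: (ltnP p.+1 q) => [lt_p1q | ge_p1q].
  have [S12 _] := @serre_Eij p p.+1 q ltac:(lia).
  have [T23 T32] := IH p.+1 q r ltac:(lia) ltac:(lia).
  have [C13 D13 _] := @comm_Eij_far p p.+1 q r ltac:(lia).
  rewrite Eij1 in S12 C13 D13.
  rewrite (@Eij_split p p.+1 q) 1?(@Ebij_split p p.+1 q) ?Eij1; try lia.
  by split; [apply: serre_qcommL | apply: serre_qcommR].
case: (ltnP q.+1 r) => [lt_q1r | ge_q1r].
  have [S12 _] := @serre_Eij p q q.+1 ltac:(lia).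
  have [S23 S32] := @serre_Eij q q.+1 r ltac:(lia).
  have [_ T21] := IH p q q.+1 ltac:(lia) ltac:(lia).
  have [_ D13 C31] := @comm_Eij_far p q q.+1 r ltac:(lia).
  rewrite Eij1 in S12 S23 S32 T21.
  rewrite (@Eij_split q q.+1 r) 1?(@Ebij_split q q.+1 r) ?Eij1; try lia.
  by split; [apply: serre_qcommR' | apply: serre_qcommL' => //; apply/commr_sym].
have [-> ->] : q = p.+1 /\ r = p.+2 by lia.
rewrite !Eij1 !Ebij1; split; apply: (proj2 (serre_E _ _)); lia.
Qed.

Lemma twist_Eij p q : [&& 0 < p, p < q & q < n]%N ->
  qcomm (Eb q) (Er p q) = qcomm (E q) (Ebr p q).
Proof.
move: {2}(q - p)%N (leqnn (q - p)) => d.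
elim: d p => [|d IH] p le_d bounds; first by lia.
case: (ltnP p.+1 q) => [lt_p1q | ge_p1q]; last first.
  have -> : q = p.+1 by lia.
  rewrite Eij1 Ebij1; apply: twist_E; lia.
rewrite (@Eij_split p p.+1 q) 1?(@Ebij_split p p.+1 q) ?Eij1; try lia.
apply: twist_qcomm; [apply: comm_E | apply: comm_E_Eb | apply: IH]; lia.
Qed.

Lemma comm_Eij_Ebij p q : [&& 0 < p, p < q & q <= n]%N -> GRing.comm (Er p q) (Ebr p q).
Proof.
move: {2}(q - p)%N (leqnn (q - p)) => d.
elim: d p => [|d IH] p le_d bounds; first by lia.
case: (ltnP p.+1 q) => [lt_p1q | ge_p1q]; last first.
  have -> : q = p.+1 by lia.
  rewrite Eij1 Ebij1; apply: comm_E_Eb; lia.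
have [S12 _] := @serre_Eij p p.+1 q ltac:(lia).
have [T12 _] := @serre_Eij_Ebij p p.+1 q ltac:(lia).
rewrite Eij1 in S12 T12.
rewrite (@Eij_split p p.+1 q) 1?(@Ebij_split p p.+1 q) ?Eij1; try lia.
apply: comm_qcomm_serre => //; apply: IH; lia.
Qed.

Lemma comm_gen_Eij_inner p m q : [&& 0 < p, p < m, m.+1 < q & q <= n]%N ->
  GRing.comm (E m) (Er p q) /\ GRing.comm (Eb m) (Er p q).
Proof.
elim: q => [|q IH] bounds; first by lia.
case: (ltnP m.+1 q) => [lt_m1q | ge_m1q].
  have [IH1 IH2] := IH ltac:(lia).
  rewrite (EijS (_ : p < q)%N); last by lia.
  by split; apply: comm_qcomm => //; [apply: comm_E | apply/commr_sym/comm_E_Eb]; lia.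
have -> : q = m.+1 by lia.
rewrite (EijS (_ : p < m.+1)%N) ?(EijS (_ : p < m)%N); try lia.
have [C13 C13b _] := @comm_gen_Eij_far m.+1 p m ltac:(lia) ltac:(lia).
have [_ S21] := @serre_Eij p m m.+1 ltac:(lia).
have [_ S21b] := @serre_Eij_Ebij p m m.+1 ltac:(lia).
have [S23 S23b] := @serre_E m m.+1 ltac:(lia) ltac:(lia).
rewrite Eij1 in S21 S21b.
split; first by apply: comm_qcomm_qcomm => //; apply/commr_sym.
have T12 := @twist_Eij p m ltac:(lia).
have C22 := @comm_E_Eb m m ltac:(lia) ltac:(lia) ltac:(lia).
have T23 := @twist_E m ltac:(lia) ltac:(lia).
apply/commr_sym.
by apply: (twist_comm_qcomm_qcomm (y1 := Ebr p m) (commr_sym C13) (commr_sym C13b)).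
Qed.

Lemma comm_Eij_of_gens (X : A) k l : (k < l)%N ->
  (forall m, (k <= m < l)%N -> GRing.comm X (E m) /\ GRing.comm X (Eb m)) ->
  GRing.comm X (Er k l) /\ GRing.comm X (Ebr k l).
Proof.
elim: l => [|l IH] lt_kl gens; first by lia.
have [X_El X_Ebl] := gens l ltac:(lia).
case: (ltnP k l) => [lt_kl' | ge_kl].
  have [IH1 IH2] := IH lt_kl' (fun m bm => gens m ltac:(lia)).
  by rewrite (EijS lt_kl') (EbijS lt_kl'); split; apply: comm_qcomm.
have -> : k = l by lia.
by rewrite Eij1 Ebij1.
Qed.

Lemma Eij_Ebij_nested_inner i j k l : [&& 0 < i, i < k, k < l, l < j & j <= n]%N ->
  GRing.comm (Er i j) (Ebr k l).
Proof.
move=> bounds; apply: (proj2 (comm_Eij_of_gens _ _)); first by lia.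
move=> m bm; have [] := @comm_gen_Eij_inner i m j ltac:(lia).
by split; apply/commr_sym.
Qed.

Lemma Eij_Ebij_nested_outer i j k l : [&& 0 < k, k < i, i < j, j < l & l <= n]%N ->
  GRing.comm (Er i j) (Ebr k l).
Proof.
move=> bounds.
have [_ D13 _] := @comm_Eij_far k i j l ltac:(lia).
have [_ S21] := @serre_Eij k i j ltac:(lia).
have [T23 _] := @serre_Eij_Ebij i j l ltac:(lia).
rewrite (@Ebij_split k j l) 1?(@Eij_split k i j); try lia.
exact: comm_qcomm_qcomm.
Qed.

Lemma Eij_Ebij_adjacent i j l : [&& 0 < i, i < j, j < l & l <= n]%N ->
  Er i j * Ebr j l = vv^-1 *: (Ebr j l * Er i j) - Ebr i l.
Proof. by move=> bounds; rewrite (@Ebij_split i j l) // /qcomm; nc_ring. Qed.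

Lemma Eij_Ebij_start i j l : [&& 0 < i, i < j, j < l & l <= n]%N ->
  Er i j * Ebr i l = vv *: (Ebr i l * Er i j).
Proof.
move=> bounds; have [T _] := @serre_Eij_Ebij i j l bounds.
by rewrite (@Ebij_split i j l) //; apply: serre_skew_comm.
Qed.

Lemma Eij_Ebij_cross i j k l : [&& 0 < i, i < k, k < j, j < l & l <= n]%N ->
  Er i j * Ebr k l = Ebr k l * Er i j + (vv - vv^-1) *: (Er k j * Ebr i l).
Proof.
move=> bounds.
have [_ D13 _] := @comm_Eij_far i k j l ltac:(lia).
have [_ S21] := @serre_Eij i k j ltac:(lia).
have [T23 _] := @serre_Eij_Ebij k j l ltac:(lia).
rewrite (@Ebij_split k j l) 1?(@Ebij_split i j l) 1?(@Eij_split i k j); try lia.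
exact: qcomm_overlap.
Qed.

Lemma Eij_Ebij_end i j k : [&& 0 < i, i < k, k < j & j <= n]%N ->
  Er i j * Ebr k j =
    vv^-1 *: (Ebr k j * Er i j) + Ebr i j * Er k j - vv^-1 *: (Er k j * Ebr i j).
Proof.
move=> bounds; have C := @comm_Eij_Ebij k j ltac:(lia).
rewrite (@Eij_split i k j) 1?(@Ebij_split i k j); try lia.
exact: qcomm_mul_comm.
Qed.

Lemma Eij_Ebij_adjacent' i j k : [&& 0 < k, k < i, i.+1 < j & j <= n]%N ->
  Er i j * Ebr k i = vv^-1 *: (Ebr k i * Er i j)
    - (Eb i * Er i.+1 j - vv^-1 *: (Er i.+1 j * Eb i)) * Er k i
    + vv^-1 *: (Er k i * (Eb i * Er i.+1 j - vv^-1 *: (Er i.+1 j * Eb i))).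
Proof.
move=> bounds.
have [C13 _ C31] := @comm_Eij_far k i i.+1 j ltac:(lia).
have T := @twist_Eij k i ltac:(lia).
rewrite (@Eij_split i i.+1 j) ?Eij1; last by lia.
apply: twist_adjacent => //; exact/commr_sym.
Qed.

Lemma Eij_Ebij_start' i j l : [&& 0 < i, i < l, l < j & j <= n]%N ->
  Er i j * Ebr i l = vv^-1 *: (Ebr i l * Er i j).
Proof.
elim: j => [|j IH] bounds; first by lia.
case: (ltnP l j) => [lt_lj | ge_lj].
  have [_ _ E_Eb] := @comm_gen_Eij_far j i l ltac:(lia) ltac:(lia).
  rewrite (EijS (_ : i < j)%N); last by lia.
  by apply: skew_comm_qcommL; [apply: IH; lia | apply/commr_sym].
have -> : j = l by lia.
have C11 := @comm_Eij_Ebij i l ltac:(lia).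
have [S12 _] := @serre_Eij_Ebij i l l.+1 ltac:(lia).
have T12 := @twist_Eij i l ltac:(lia).
rewrite Ebij1 in S12; rewrite (EijS (_ : i < l)%N); last by lia.
by apply: (twist_skew_comm (y2 := Eb l)).
Qed.

Lemma Eij_Ebij_cross' i j k l : [&& 0 < k, k < i, i < l, l < j & j <= n]%N ->
  Er i j * Ebr k l = Ebr k l * Er i j + vv^-1 *: (Ebr i l * Er k j) - vv *: (Er k j * Ebr i l).
Proof.
elim: j => [|j IH] bounds; first by lia.
case: (ltnP l j) => [lt_lj | ge_lj].
  have [_ _ E_Ebkl] := @comm_gen_Eij_far j k l ltac:(lia) ltac:(lia).
  have [_ _ E_Ebil] := @comm_gen_Eij_far j i l ltac:(lia) ltac:(lia).
  rewrite (EijS (_ : i < j)%N) 1?(EijS (_ : k < j)%N); try lia.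
  by apply: defect_comm_qcommL; [apply: IH; lia | apply/commr_sym | apply/commr_sym].
have -> : j = l by lia.
have [C13 _ _] := @comm_gen_Eij_far l k i ltac:(lia) ltac:(lia).
have C22 := @comm_Eij_Ebij i l ltac:(lia).
have [S23 _] := @serre_Eij_Ebij i l l.+1 ltac:(lia).
have T23 := @twist_Eij i l ltac:(lia).
rewrite Ebij1 in S23.
rewrite (EijS (_ : i < l)%N) 1?(EijS (_ : k < l)%N); try lia.
rewrite (@Ebij_split k i l) 1?(@Eij_split k i l); try lia.
by apply: (twist_overlap (y3 := Eb l) (commr_sym C13)).
Qed.

Lemma Eij_Ebij_end' i j k : [&& 0 < k, k < i, i < j & j <= n]%N ->
  Er i j * Ebr k j = vv *: (Ebr k j * Er i j) - vv *: (Er k j * Ebr i j) + Ebr i j * Er k j.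
Proof.
move=> bounds; have C := @comm_Eij_Ebij i j ltac:(lia).
rewrite (@Ebij_split k i j) 1?(@Eij_split k i j); try lia.
exact: mul_qcomm_comm.
Qed.

End RootVectors.

Theorem lemma2p10 (n : nat) (A : algType Qv) (K Ki Kb E F Eb Fb : nat -> A) :
  qq_rels n K Ki Kb E F Eb Fb ->
  forall i j k l : nat,
    (1 <= i)%N -> (i < j)%N -> (j <= n)%N ->
    (1 <= k)%N -> (k < l)%N -> (l <= n)%N ->
  let Er := Eij E in
  let Ebr := Ebij E Eb in
  let X := Er i j * Ebr k l in
  let Y := Ebr k l * Er i j in
  ([|| (j < k)%N, (i < k)%N && (l < j)%N, (i == k) && (j == l),
         (l < i)%N | (k < i)%N && (j < l)%N] -> X = Y) /\
      ((j == k) -> X = vv^-1 *: Y - Ebr i l) /\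
      ((i == k) && (j < l)%N -> X = vv *: Y) /\
      ((i < k)%N && (k < j)%N && (j < l)%N ->
        X = Y + (vv - vv^-1) *: (Er k j * Ebr i l)) /\
      ((i < k)%N && (k < j)%N && (j == l) ->
        X = vv^-1 *: Y + Ebr i j * Er k j - vv^-1 *: (Er k j * Ebr i j)) /\
      ((l == i) && (i.+1 < j)%N ->
        X = vv^-1 *: Y
            - (Eb i * Er i.+1 j - vv^-1 *: (Er i.+1 j * Eb i)) * Er k i
            + vv^-1 *: (Er k i * (Eb i * Er i.+1 j - vv^-1 *: (Er i.+1 j * Eb i)))) /\
      ((k == i) && (l < j)%N -> X = vv^-1 *: Y) /\
      ((k < i)%N && (i < l)%N && (l < j)%N ->
        X = Y + vv^-1 *: (Ebr i l * Er k j) - vv *: (Er k j * Ebr i l)) /\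
      ((k < i)%N && (j == l) ->
        X = vv *: Y - vv *: (Er k j * Ebr i j) + Ebr i j * Er k j).
Proof.
move=> rels i j k l i_gt0 lt_ij le_jn k_gt0 lt_kl le_ln Er Ebr X Y; rewrite /X /Y /Er /Ebr.
split.
  case/orP => [lt_jk | /or4P [/andP [lt_ik lt_lj] | /andP [/eqP eq_ik /eqP eq_jl] |
                              lt_li | /andP [lt_ki lt_jl]]].
  - by have [_ C _] := comm_Eij_far rels (p := i) (q := j) (r := k) (s := l) ltac:(lia).
  - apply: (Eij_Ebij_nested_inner rels); lia.
  - subst k l; apply: (comm_Eij_Ebij rels); lia.
  - by have [_ _ C] := comm_Eij_far rels (p := k) (q := l) (r := i) (s := j) ltac:(lia).
  - apply: (Eij_Ebij_nested_outer rels); lia.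
split; first by move/eqP => eq_jk; subst k; apply: (Eij_Ebij_adjacent rels); lia.
split; first by case/andP => /eqP eq_ik lt_jl; subst k; apply: (Eij_Ebij_start rels); lia.
split; first by move=> cond; apply: (Eij_Ebij_cross rels); lia.
split; first by case/andP => cond /eqP eq_jl; subst l; apply: (Eij_Ebij_end rels); lia.
split; first by case/andP => /eqP eq_li lt_i1j; subst l; apply: (Eij_Ebij_adjacent' rels); lia.
split; first by case/andP => /eqP eq_ki lt_lj; subst k; apply: (Eij_Ebij_start' rels); lia.
split; first by move=> cond; apply: (Eij_Ebij_cross' rels); lia.
by case/andP => lt_ki /eqP eq_jl; subst l; apply: (Eij_Ebij_end' rels); lia.
Qed.
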